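(* Let $m\ge3$. Then $\mathcal{H}_2$, viewed as the subgroup of $\mathcal{H}_m$ consisting of the elements that fix every point outside rays $0$ and $1$, is at least quadratically distorted in $\mathcal{H}_m$: there exist elements $\sigma_n\in\mathcal{H}_2$ ($n\in\mathbb{N}$) and constants $c,C>0$ such that the word length of $\sigma_n$ in $\mathcal{H}_2$ is at least $cn^2$ while its word length in $\mathcal{H}_m$ is at most $Cn$ (word lengths with respect to fixed finite generating sets).
   Context: Let $\mathbb{N}=\{1,2,3,\dots\}$, $\mathbb{Z}_n$ the integers modulo $n$, $R_n=\mathbb{Z}_n\times\mathbb{N}$ (ray $i$ is $\{(i,k):k\in\mathbb{N}\}$). The Houghton group $\mathcal{H}_n$ is the group of permutations $\sigma$ of $R_n$ for which there exist $N\ge0$ and integers $t_i$ with $(i,k)\sigma=(i,k+t_i)$ for all $i\in\mathbb{Z}_n$, $k\ge N$ (right actions); $\mathcal{H}_n$ is finitely generated for $n\ge2$. Identifying $R_2$ with the union of rays $0$ and $1$ of $R_m$ embeds $\mathcal{H}_2$ in $\mathcal{H}_m$. *)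

From mathcomp Require Import all_boot all_order all_algebra.
From Stdlib Require List.
Set Implicit Arguments. Unset Strict Implicit. Unset Printing Implicit Defensive.
Import Order.TTheory GRing.Theory Num.Theory.

(* Points of R_m: ray index in 'I_m and position k : nat.
   Positions are 0-indexed (k = 0 corresponds to the paper's k = 1). *)
Definition pt (m : nat) : Type := ('I_m * nat)%type.

Definition is_houghton (m : nat) (f : pt m -> pt m) : Prop :=
  bijective f /\
  exists (N : nat) (t : 'I_m -> int), forall (i : 'I_m) (k : nat), (N <= k)%N ->
    (f (i, k)).1 = i /\ Posz ((f (i, k)).2) = (Posz k + t i)%R.

(* Words: letters (s, b), b = true meaning the inverse of s.
   Right actions: the first letter acts first. *)
Definition letter_rel (m : nat) (a : (pt m -> pt m) * bool) (p q : pt m) : Prop :=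
  if a.2 then a.1 q = p else a.1 p = q.

Fixpoint word_rel (m : nat) (w : seq ((pt m -> pt m) * bool)) (p q : pt m) : Prop :=
  match w with
  | [::] => p = q
  | a :: w' => exists r, letter_rel a p r /\ word_rel w' r q
  end.

Definition word_over (m : nat) (S : seq (pt m -> pt m)) (w : seq ((pt m -> pt m) * bool)) : Prop :=
  forall a, List.In a w -> List.In a.1 S.

Definition represents (m : nat) (w : seq ((pt m -> pt m) * bool)) (g : pt m -> pt m) : Prop :=
  forall p q, word_rel w p q <-> g p = q.

Definition gen_set (m : nat) (S : seq (pt m -> pt m)) : Prop :=
  (forall s, List.In s S -> is_houghton s) /\
  (forall g, is_houghton g -> exists w, word_over S w /\ represents w g).

(* Embedding H_2 -> H_m: rays 0,1 of R_2 identified with rays 0,1 of R_m,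
   identity elsewhere. *)
Definition ext (m : nat) (s : pt 2 -> pt 2) (p : pt m) : pt m :=
  if (val p.1 < 2)%N then
    let q := s (inord (val p.1), p.2) in (insubd p.1 (val q.1), q.2)
  else p.

(* Identify R_2 with the integers.  An element of H_2 moves every point a bounded distance
   and is a translation near both ends, so all pairs whose order it reverses lie in a bounded
   box; hence it has boundedly many inversions on any finite set.  Inversion counts are
   subadditive under composition, so a word of length L in the generators of H_2 has at most
   K L inversions.  The element reversing the first 2n points of ray 1 has at least n^2
   inversions, so its length in H_2 is at least n^2 / K.  In H_m a third ray provides room:
   that element is the product of 2n-th powers of three ray shifts, so its length in H_m is
   linear in n. *)

From mathcomp Require Import all_boot all_order all_algebra zify.
Import Order.TTheory GRing.Theory Num.Theory.

Set Implicit Arguments.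
Unset Strict Implicit.
Unset Printing Implicit Defensive.

Definition coord (p : pt 2) : int :=
  if val p.1 == 0%N then (- (Posz p.2 + 1))%R else Posz p.2.

Lemma ord2_cases (i : 'I_2) : i = ord0 \/ i = ord_max.
Proof. by case: i => -[|[|//]] lt_i2; [left | right]; apply: val_inj. Qed.

Lemma coord0 k : coord (ord0, k) = (- (Posz k + 1))%R. Proof. by []. Qed.
Lemma coord1 k : coord (@ord_max 1, k) = Posz k. Proof. by []. Qed.

Lemma coord_inj : injective coord.
Proof.
move=> [i k] [j l]; case: (ord2_cases i) => ->; case: (ord2_cases j) => ->;
  rewrite ?coord0 ?coord1 => E; try lia; congr pair; lia.
Qed.

Definition inversions (f : pt 2 -> pt 2) (W : seq (pt 2)) : nat :=
  \sum_(x <- W) \sum_(y <- W)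
    ((coord x < coord y) && (coord (f y) < coord (f x)))%R.

Lemma eq_inversions f g W : f =1 g -> inversions f W = inversions g W.
Proof. by move=> fg; apply: eq_bigr => x _; apply: eq_bigr => y _; rewrite !fg. Qed.

Lemma inversions_id W : inversions id W = 0%N.
Proof. by rewrite /inversions big1 // => x _; rewrite big1 // => y _; case: ltgtP. Qed.

Lemma inversions_comp f g W : injective g ->
  (inversions (f \o g) W <= inversions g W + inversions f (map g W))%N.
Proof.
move=> g_inj; rewrite /inversions big_map -big_split; apply: leq_sum => x _.
rewrite big_map -big_split; apply: leq_sum => y _ /=.
case: (ltgtP (coord x) (coord y)) => //= lt_xy.
case: (ltgtP (coord (g x)) (coord (g y))) => //= [_|/coord_inj/g_inj gxy].
  by rewrite addn0 leq_b1.
by rewrite gxy ltxx in lt_xy.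
Qed.

Lemma count_coord_le B (V : seq (pt 2)) : uniq V ->
  (count (fun x => `|coord x| <= Posz B)%R V <= B.*2.+1)%N.
Proof.
move=> uV; rewrite -size_filter -(size_map coord).
rewrite -[B.*2.+1](size_iota 0) -(size_map (fun k => Posz k - Posz B)%R).
apply: uniq_leq_size; first by rewrite (map_inj_uniq coord_inj) filter_uniq.
move=> u /mapP [x]; rewrite mem_filter => /andP [Bx _] ->.
apply/mapP; exists (absz (coord x + Posz B)%R); last by lia.
by rewrite mem_iota; lia.
Qed.

Lemma inversions_le_box f h B W : uniq W -> injective h ->
  (forall x y, (coord x < coord y)%R -> (coord (f y) < coord (f x))%R ->
     (`|coord (h x)| <= Posz B)%R /\ (`|coord (h y)| <= Posz B)%R) ->
  (inversions f W <= B.*2.+1 ^ 2)%N.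
Proof.
move=> uW h_inj box.
pose P x := (`|coord (h x)| <= Posz B)%R.
apply: (@leq_trans (\sum_(x <- W) \sum_(y <- W) (P x * P y)%N)).
  apply: leq_sum => x _; apply: leq_sum => y _.
  case: andP => // -[lt_xy lt_fyx].
  by case: (box x y lt_xy lt_fyx); rewrite /P => -> ->.
have sumP : \sum_(x <- W) (P x : nat) = count P W.
  by rewrite -sum1_count [RHS]big_mkcond; apply: eq_bigr => x _; case: (P x).
have -> : \sum_(x <- W) \sum_(y <- W) (P x * P y)%N = count P W ^ 2.
  rewrite -mulnn -{1}sumP big_distrl; apply: eq_bigr => x _.
  by rewrite -big_distrr sumP.
rewrite leq_exp2r //; have := @count_coord_le B (map h W).
by rewrite count_map (map_inj_uniq h_inj); apply.
Qed.

Lemma houghton_coord_shift s : is_houghton s ->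
  exists (N : nat) (d : 'I_2 -> int), forall i k, (N <= k)%N ->
    coord (s (i, k)) = (coord (i, k) + d i)%R.
Proof.
case=> _ [N [t s_transl]]; exists N, (fun i => if val i == 0%N then - t i else t i)%R.
move=> i k le_Nk; case: (s_transl i k le_Nk) => ray_si pos_si.
by rewrite /coord /= ray_si; case: ifP => _; rewrite ?pos_si; lia.
Qed.

Lemma houghton_displacement_bounded s : is_houghton s ->
  exists D : nat, forall p, (`|coord (s p) - coord p| <= Posz D)%R.
Proof.
move=> /houghton_coord_shift [N [d s_shift]].
pose disp p := absz (coord (s p) - coord p)%R.
pose D0 := \max_(k < N) (disp (ord0, val k) + disp (ord_max, val k))%N.
exists (D0 + absz (d ord0) + absz (d ord_max))%N => p.
have [lt_pN | le_Np] := ltnP p.2 N.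
  have := leq_bigmax (F := fun k : 'I_N => (disp (ord0, val k) + disp (ord_max, val k))%N)
    (Ordinal lt_pN).
  by rewrite -/D0 /disp /=; case: p lt_pN => i k /=; case: (ord2_cases i) => ->; lia.
by case: p le_Np => i k /= ?; rewrite s_shift //; case: (ord2_cases i) => ->; lia.
Qed.

Lemma houghton_inversions_in_box s : is_houghton s -> exists B : nat, forall x y,
  (coord x < coord y)%R -> (coord (s y) < coord (s x))%R ->
  (`|coord x| <= Posz B)%R /\ (`|coord y| <= Posz B)%R.
Proof.
move=> s_hough; have [D disp_le] := houghton_displacement_bounded s_hough.
have [N [d s_shift]] := houghton_coord_shift s_hough.
have far_monotone i k l : (N <= k)%N -> (N <= l)%N ->
    (coord (i, k) < coord (i, l))%R -> (coord (s (i, k)) < coord (s (i, l)))%R.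
  by move=> ? ?; rewrite !s_shift // ltrD2r.
exists (N + D.*2 + 1)%N => -[i k] [j l]; move: (disp_le (i, k)) (disp_le (j, l)).
case: (ord2_cases i) => ->; case: (ord2_cases j) => -> Dx Dy lt_xy lt_sxy;
  rewrite ?coord0 ?coord1 in Dx Dy lt_xy *.
- have [lt_lN|le_Nl] := ltnP l N; first by lia.
  have le_Nk : (N <= k)%N by lia.
  by have := far_monotone ord0 k l le_Nk le_Nl lt_xy; rewrite ltNge ltW.
- by lia.
- by lia.
- have [lt_kN|le_Nk] := ltnP k N; first by lia.
  have le_Nl : (N <= l)%N by lia.
  by have := far_monotone ord_max k l le_Nk le_Nl lt_xy; rewrite ltNge ltW.
Qed.

Lemma houghton_inversions_bounded s : is_houghton s -> exists K, forall g, cancel g s ->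
  forall W, uniq W -> (inversions s W <= K)%N /\ (inversions g W <= K)%N.
Proof.
move=> /houghton_inversions_in_box [B box]; exists (B.*2.+1 ^ 2)%N => g gK W uW.
split; first by apply: (@inversions_le_box _ id) => // x y /box; apply.
apply: (inversions_le_box (h := g)) => //; first exact: can_inj gK.
by move=> x y lt_xy lt_gxy; have := box _ _ lt_gxy; rewrite !gK => /(_ lt_xy) [].
Qed.

Lemma generators_inversions_bounded (S : seq (pt 2 -> pt 2)) :
  (forall s, List.In s S -> is_houghton s) -> exists K, forall s, List.In s S ->
  forall g, cancel g s ->
  forall W, uniq W -> (inversions s W <= K)%N /\ (inversions g W <= K)%N.
Proof.
elim: S => [|s S IH] S_hough; first by exists 0%N.
have [K1 bound_s] := houghton_inversions_bounded (S_hough s (or_introl erefl)).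
have [K2 bound_S] := IH (fun s' in_S => S_hough s' (or_intror in_S)).
exists (maxn K1 K2) => s' [<-|in_S] g gK W uW.
  have [le_s le_g] := bound_s g gK W uW.
  by split; [exact: leq_trans le_s (leq_maxl _ _) | exact: leq_trans le_g (leq_maxl _ _)].
have [le_s le_g] := bound_S s' in_S g gK W uW.
by split; [exact: leq_trans le_s (leq_maxr _ _) | exact: leq_trans le_g (leq_maxr _ _)].
Qed.

Lemma represents_inversions_le (S : seq (pt 2 -> pt 2)) K :
  (forall s, List.In s S -> is_houghton s) ->
  (forall s, List.In s S -> forall g, cancel g s ->
     forall W, uniq W -> (inversions s W <= K)%N /\ (inversions g W <= K)%N) ->
  forall w g, word_over S w -> represents w g ->
  forall W, uniq W -> (inversions g W <= size w * K)%N.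
Proof.
move=> S_hough bound; elim=> [|[s b] w IH] g w_S w_g W uW.
  by rewrite (@eq_inversions _ id) ?inversions_id // => p; apply/(w_g p).
have in_S : List.In s S by apply: (w_S (s, b)); left.
have [[s' ss' s's] _] := S_hough s in_S.
pose L := if b then s' else s; pose L' := if b then s else s'.
have LK : cancel L L' by rewrite /L /L'; case: (b).
have L'K : cancel L' L by rewrite /L /L'; case: (b).
have letterE p r : letter_rel (s, b) p r <-> L p = r.
  by rewrite /letter_rel /L /=; case: (b); split=> [<-|<-].
have w_gL' : represents w (g \o L').
  move=> r q; rewrite -(w_g (L' r) q) /=; split => [w_rq|[r' [/letterE <- w_r'q]]].
    by exists r; split=> //; apply/letterE; rewrite L'K.
  by rewrite L'K in w_r'q.
have gE : g =1 (g \o L') \o L by move=> p /=; rewrite LK.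
rewrite (eq_inversions _ gE); apply: leq_trans (inversions_comp _ _ (can_inj LK)) _.
rewrite /= mulSn leq_add //.
  by have [? ?] := bound s in_S s' s's W uW; rewrite /L; case: (b).
by apply: IH => // [a a_w|]; [apply: w_S; right | rewrite (map_inj_uniq (can_inj LK))].
Qed.

Lemma inversions_le_word_length (S : seq (pt 2 -> pt 2)) :
  (forall s, List.In s S -> is_houghton s) -> exists K, forall w g,
  word_over S w -> represents w g ->
  forall W, uniq W -> (inversions g W <= size w * K)%N.
Proof.
move=> S_hough; have [K bound] := generators_inversions_bounded S_hough.
by exists K; apply: represents_inversions_le.
Qed.

Definition reverse_prefix (n : nat) (p : pt 2) : pt 2 :=
  if (val p.1 == 1%N) && (p.2 < n.*2)%N then (p.1, (n.*2 - p.2.+1)%N) else p.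

Lemma reverse_prefixK n : involutive (reverse_prefix n).
Proof.
case=> i k; rewrite /reverse_prefix /=.
case E: ((val i == 1%N) && (k < n.*2)%N); last by rewrite /= E.
by case/andP: E => /= -> lt_k2n; rewrite ifT; [congr pair; lia | lia].
Qed.

Lemma reverse_prefix_houghton n : is_houghton (reverse_prefix n).
Proof.
split; first exact: (inv_bij (reverse_prefixK n)).
exists n.*2, (fun=> 0%R) => i k le_2nk.
by rewrite /reverse_prefix ltnNge le_2nk andbF addr0.
Qed.

Lemma reverse_prefix_inversions n :
  (n * n <= inversions (reverse_prefix n) [seq (ord_max, k) | k <- iota 0 n.*2])%N.
Proof.
have -> : (n * n = \sum_(0 <= i < n) \sum_(n <= j < n.*2) 1)%N.
  by rewrite !sum_nat_const_nat subn0 -addnn addnK muln1.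
have split2n : iota 0 n.*2 = index_iota 0 n ++ index_iota n n.*2.
  by rewrite /index_iota -addnn iotaD add0n addnK subn0.
rewrite /inversions big_map split2n big_cat /=; apply: leq_trans (leq_addr _ _).
rewrite !big_seq; apply: leq_sum => i; rewrite mem_index_iota => lt_in.
rewrite map_cat big_cat big_map /=; apply: leq_trans (leq_addl _ _).
rewrite big_map [leqRHS]big_seq; apply: leq_sum => j; rewrite mem_index_iota => lt_nj.
by rewrite /reverse_prefix /= !ifT ?coord1 ?ltz_nat; lia.
Qed.

Definition ray_shift m (a b : 'I_m) (p : pt m) : pt m :=
  if p.1 == a then (if p.2 == 0%N then (b, 0%N) else (a, p.2.-1))
  else if p.1 == b then (b, p.2.+1) else p.

Lemma ray_shiftK m (a b : 'I_m) : a != b -> cancel (ray_shift a b) (ray_shift b a).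
Proof.
move=> neq_ab [i k]; rewrite /ray_shift /=.
case: (eqVneq i a) => [->|neq_ia].
  case: (eqVneq k 0%N) => [->|k_gt0] /=; first by rewrite eqxx.
  by rewrite (negbTE neq_ab) eqxx; congr pair; lia.
case: (eqVneq i b) => [->|neq_ib] /=; first by rewrite eqxx.
by rewrite (negbTE neq_ib) (negbTE neq_ia).
Qed.

Lemma ray_shift_houghton m (a b : 'I_m) : a != b -> is_houghton (ray_shift a b).
Proof.
move=> neq_ab; split.
  by exists (ray_shift b a); apply: ray_shiftK; rewrite // eq_sym.
exists 1%N, (fun i => if i == a then (-1)%R else if i == b then 1%R else 0%R).
move=> i k k_gt0; rewrite /ray_shift /=.
case: (eqVneq i a) => [->|neq_ia]; first by rewrite ifF /=; [split=> //; lia | lia].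
by case: (eqVneq i b) => [->|neq_ib] /=; split=> //; lia.
Qed.

Lemma iter_ray_shift m (a b : 'I_m) K i k : a != b ->
  iter K (ray_shift a b) (i, k) =
  if i == a then (if (k < K)%N then (b, (K - k.+1)%N) else (a, (k - K)%N))
  else if i == b then (b, (k + K)%N) else (i, k).
Proof.
move=> neq_ab; elim: K => [|K IH].
  by rewrite /= subn0 addn0; case: (eqVneq i a) => [->|_] //; case: (eqVneq i b) => [->|_].
rewrite iterS IH /ray_shift; case: (eqVneq i a) => [_|neq_ia].
  have [lt_kK|le_Kk] := ltnP k K.
    by rewrite /= eq_sym (negbTE neq_ab) eqxx ifT; [congr pair; lia | lia].
  rewrite /= eqxx; case: (eqVneq (k - K)%N 0%N) => [k_eq|k_neq].
    by rewrite ifT; [congr pair; lia | lia].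
  by rewrite ifF; [congr pair; lia | lia].
case: (eqVneq i b) => [_|neq_ib] /=.
  by rewrite eq_sym (negbTE neq_ab) eqxx; congr pair; lia.
by rewrite (negbTE neq_ia) (negbTE neq_ib).
Qed.

Lemma word_rel_cat m (w1 w2 : seq ((pt m -> pt m) * bool)) p q :
  word_rel (w1 ++ w2) p q <-> exists r, word_rel w1 p r /\ word_rel w2 r q.
Proof.
elim: w1 p => [|a w1 IH] p /=; first by split=> [w2_pq|[r [-> //]]]; exists p.
split; first by case=> r [a_pr /IH [r' [w1_rr' w2_r'q]]]; exists r'; split=> //; exists r.
by case=> r' [[r [a_pr w1_rr']] w2_r'q]; exists r; split=> //; apply/IH; exists r'.
Qed.

Lemma represents_cat m (w1 w2 : seq ((pt m -> pt m) * bool)) g1 g2 :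
  represents w1 g1 -> represents w2 g2 -> represents (w1 ++ w2) (g2 \o g1).
Proof.
move=> w1_g1 w2_g2 p q; rewrite word_rel_cat; split=> [[r [/w1_g1 <- /w2_g2 //]]|<-].
by exists (g1 p); split; [apply/w1_g1 | apply/w2_g2].
Qed.

Lemma eq_represents m (w : seq ((pt m -> pt m) * bool)) g g' :
  g =1 g' -> represents w g -> represents w g'.
Proof. by move=> gg' w_g p q; rewrite -gg'. Qed.

Lemma word_over_cat m S (w1 w2 : seq ((pt m -> pt m) * bool)) :
  word_over S w1 -> word_over S w2 -> word_over S (w1 ++ w2).
Proof. by move=> S_w1 S_w2 a /(List.in_app_or w1 w2 a) [/S_w1|/S_w2]. Qed.

Definition word_pow m (w : seq ((pt m -> pt m) * bool)) k := flatten (nseq k w).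

Lemma size_word_pow m (w : seq ((pt m -> pt m) * bool)) k :
  size (word_pow w k) = (k * size w)%N.
Proof. by rewrite /word_pow size_flatten /shape map_nseq sumn_nseq mulnC. Qed.

Lemma word_over_pow m S (w : seq ((pt m -> pt m) * bool)) k :
  word_over S w -> word_over S (word_pow w k).
Proof. by move=> S_w; elim: k => [|k IH]; [move=> a [] | exact: word_over_cat]. Qed.

Lemma represents_pow m (w : seq ((pt m -> pt m) * bool)) g k :
  represents w g -> represents (word_pow w k) (iter k g).
Proof.
move=> w_g; elim: k => [p q|k IH] /=; first by [].
by apply: eq_represents (represents_cat w_g IH) => p; rewrite [RHS]iterSr.
Qed.

(* Shifting ray 1 into ray 2, ray 2 into ray 0 and ray 0 into ray 1, each 2n times, carries the
   first 2n points of ray 1 around the three rays and brings them back in reverse order. *)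
Lemma ext_reverse_prefixE m (r0 r1 r2 : 'I_m) n :
  val r0 = 0%N -> val r1 = 1%N -> val r2 = 2%N -> forall p,
  ext (reverse_prefix n) p =
  iter n.*2 (ray_shift r0 r1) (iter n.*2 (ray_shift r2 r0) (iter n.*2 (ray_shift r1 r2) p)).
Proof.
move=> r0E r1E r2E [i k].
have neq01 : r0 != r1 by rewrite -val_eqE r0E r1E.
have neq12 : r1 != r2 by rewrite -val_eqE r1E r2E.
have neq20 : r2 != r0 by rewrite -val_eqE r0E r2E.
have e01 := negbTE neq01; have e12 := negbTE neq12; have e20 := negbTE neq20.
have e10 : (r1 == r0) = false by rewrite eq_sym.
have e21 : (r2 == r1) = false by rewrite eq_sym.
have e02 : (r0 == r2) = false by rewrite eq_sym.
have pairE (a b : 'I_m) (x y : nat) : val a = val b -> x = y -> (a, x) = (b, y).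
  by move=> /val_inj -> ->.
have inord1 : val (@inord 1 1) = 1%N by apply: inordK.
have inord0 : val (@inord 1 0) = 0%N by apply: inordK.
rewrite /ext /reverse_prefix /=.
case: (eqVneq i r1) => [->|neq_i1].
  rewrite iter_ray_shift // eqxx r1E /= inord1 eqxx /=.
  have [lt_k2n|le_2nk] := ltnP k n.*2.
    rewrite /= iter_ray_shift // eqxx ifT; last by lia.
    rewrite iter_ray_shift // eqxx ifT; last by lia.
    by apply: pairE; [rewrite val_insubd inord1 /= r1E; case: ifP | lia].
  rewrite iter_ray_shift // e10 e12 iter_ray_shift // e10 eqxx.
  by apply: pairE; [rewrite val_insubd inord1 /= r1E; case: ifP | rewrite /=; lia].
case: (eqVneq i r2) => [->|neq_i2].
  rewrite iter_ray_shift // e21 eqxx iter_ray_shift // eqxx r2E /=.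
  have -> : (k + n.*2 < n.*2)%N = false by lia.
  by rewrite iter_ray_shift // e20 e21; apply: pairE => //; lia.
case: (eqVneq i r0) => [->|neq_i0].
  rewrite iter_ray_shift // e01 e02 iter_ray_shift // e02 eqxx iter_ray_shift // eqxx.
  have -> : (k + n.*2 < n.*2)%N = false by lia.
  rewrite r0E /= inord0 /=.
  by apply: pairE; [rewrite val_insubd inord0 r0E; case: ifP | rewrite /=; lia].
rewrite iter_ray_shift // (negbTE neq_i1) (negbTE neq_i2) iter_ray_shift //.
rewrite (negbTE neq_i2) (negbTE neq_i0) iter_ray_shift // (negbTE neq_i1) (negbTE neq_i0).
have -> // : (val i < 2)%N = false.
by move: neq_i0 neq_i1; rewrite -!val_eqE r0E r1E; case: (val i) => [|[|]].
Qed.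

Lemma reverse_prefix_word_length (S : seq (pt 2 -> pt 2)) :
  (forall s, List.In s S -> is_houghton s) -> exists K, forall n w,
  word_over S w -> represents w (reverse_prefix n) -> (n * n <= size w * K)%N.
Proof.
move=> /inversions_le_word_length [K inv_le]; exists K => n w S_w w_rev.
apply: leq_trans (reverse_prefix_inversions n) (inv_le _ _ S_w w_rev _ _).
by rewrite map_inj_uniq ?iota_uniq // => k l [].
Qed.

Lemma ext_reverse_prefix_word_length m (S : seq (pt m -> pt m)) :
  (3 <= m)%N -> gen_set S -> exists C, forall n, exists w, word_over S w /\
  represents w (ext (reverse_prefix n)) /\ (size w <= C * n)%N.
Proof.
move=> m_ge3 [_ S_gen].
pose r0 : 'I_m := Ordinal (ltn_trans (isT : 0 < 2)%N m_ge3).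
pose r1 : 'I_m := Ordinal (ltn_trans (isT : 1 < 2)%N m_ge3).
pose r2 : 'I_m := Ordinal m_ge3.
have [w01 [S_w01 w01_rep]] := S_gen _ (@ray_shift_houghton m r0 r1 isT).
have [w12 [S_w12 w12_rep]] := S_gen _ (@ray_shift_houghton m r1 r2 isT).
have [w20 [S_w20 w20_rep]] := S_gen _ (@ray_shift_houghton m r2 r0 isT).
exists (2 * (size w12 + size w20 + size w01))%N => n.
exists (word_pow w12 n.*2 ++ word_pow w20 n.*2 ++ word_pow w01 n.*2); split.
  by do 2?apply: word_over_cat; apply: word_over_pow.
split; last by rewrite !size_cat !size_word_pow; lia.
apply: eq_represents (represents_cat (represents_pow _ w12_rep)
  (represents_cat (represents_pow _ w20_rep) (represents_pow _ w01_rep))).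
by move=> p; rewrite (ext_reverse_prefixE n (r0 := r0) (r1 := r1) (r2 := r2)).
Qed.

Theorem mainTheorem8 (m : nat) (hm : (3 <= m)%N)
  (S2 : seq (pt 2 -> pt 2)) (Sm : seq (pt m -> pt m))
  (hS2 : gen_set S2) (hSm : gen_set Sm) :
  exists (sigma : nat -> pt 2 -> pt 2) (c C : rat),
    (0 < c)%R /\ (0 < C)%R /\
    forall n : nat, (0 < n)%N ->
      is_houghton (sigma n) /\
      (forall w, word_over S2 w -> represents w (sigma n) ->
         (c * (n%:R) ^+ 2 <= (size w)%:R)%R) /\
      (exists w, word_over Sm w /\ represents w (@ext m (sigma n)) /\
         ((size w)%:R <= C * n%:R)%R).
Proof.
have [K lower] := reverse_prefix_word_length hS2.1.
have [C upper] := ext_reverse_prefix_word_length hm hSm.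
exists reverse_prefix, (K.+1%:R)^-1%R, C.+1%:R%R.
split; first by rewrite invr_gt0 ltr0n.
split=> // n n_gt0; split; first exact: reverse_prefix_houghton.
split=> [w S_w w_rev | ].
  rewrite ler_pdivrMl ?ltr0n // -natrX -natrM ler_nat.
  by have := lower n w S_w w_rev; nia.
have [w [S_w [w_rev size_w]]] := upper n.
by exists w; split=> //; split=> //; rewrite -natrM ler_nat; nia.
Qed.
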